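(* Let $D(\theta,\gamma_1,\gamma_2)$ be an adaptive estimating function on the model $\mathcal{M}$ such that, for every $\mathbb{P}\in\mathcal{M}$, $D\{\theta(\mathbb{P}),\gamma_1(\mathbb{P}),\gamma_2(\mathbb{P})\}$ is an influence curve of $\theta$ at $\mathbb{P}$ relative to $\mathcal{M}$. Suppose that for every $\mathbb{P}\in\mathcal{M}$ the sections $\mathcal{M}_1(\mathbb{P})$ and $\mathcal{M}_2(\mathbb{P})$ are convex (and their elements are mutually absolutely continuous with square-integrable likelihood ratios). Then $D$ is doubly robust.
   Context: $X$ is a random element; $\mathcal{M}$ is a set of laws of $X$. $\theta:\mathcal{M}\to\mathbb{R}^k$ is the parameter of interest and $\gamma(\mathbb{P})=(\gamma_1(\mathbb{P}),\gamma_2(\mathbb{P}))$ a parameterization of nuisance functions; $(\theta(\mathbb{P}),\gamma_1(\mathbb{P}),\gamma_2(\mathbb{P}))$ is variation independent. An (adaptive) estimating function is a function $D(\theta,\gamma)=D(X;\theta,\gamma_1,\gamma_2)$ such that for every $\mathbb{P}\in\mathcal{M}$: $\mathbb{E}_{\mathbb{P}}[D\{\theta(\mathbb{P}),\gamma(\mathbb{P})\}]=0$; $\mathbb{E}_{\mathbb{P}}[D\{\theta',\gamma(\mathbb{P})\}]\neq0$ for $\theta'\neq\theta(\mathbb{P})$ near $\theta(\mathbb{P})$; and $\mathbb{E}_{\mathbb{P}}[D\{\theta,\gamma(\mathbb{P}')\}^2]<\infty$. It is doubly robust if for every $\mathbb{P}\in\mathcal{M}$ and all values $\gamma_1,\gamma_2$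 in the ranges of $\gamma_1(\cdot),\gamma_2(\cdot)$: $\mathbb{E}_{\mathbb{P}}[D\{\theta(\mathbb{P}),\gamma_1(\mathbb{P}),\gamma_2\}]=\mathbb{E}_{\mathbb{P}}[D\{\theta(\mathbb{P}),\gamma_1,\gamma_2(\mathbb{P})\}]=0$. Sections: $\mathcal{M}_1(\mathbb{P})=\{\mathbb{P}'\in\mathcal{M}:\theta(\mathbb{P}')=\theta(\mathbb{P}),\ \gamma_2(\mathbb{P}')=\gamma_2(\mathbb{P})\}$, $\mathcal{M}_2(\mathbb{P})=\{\mathbb{P}'\in\mathcal{M}:\theta(\mathbb{P}')=\theta(\mathbb{P}),\ \gamma_1(\mathbb{P}')=\gamma_1(\mathbb{P})\}$. An influence curve of $\theta$ at $\mathbb{P}$ relative to $\mathcal{M}$ is an $\mathrm{IC}(\mathbb{P})\in L_0^2(\mathbb{P})$ such that for every regular (quadratic-mean differentiable) parametric submodel $\{\mathbb{P}_t\}\subset\mathcal{M}$ with $\mathbb{P}_0=\mathbb{P}$ and score $S$, $\frac{d}{dt}\theta(\mathbb{P}_t)\big|_{t=0}=\mathbb{E}_{\mathbb{P}}[\mathrm{IC}(\mathbb{P})S(X)]$. *)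

From HB Require Import structures.
From mathcomp Require Import all_boot all_order all_algebra.
From mathcomp Require Import all_classical all_reals all_analysis.
Set Implicit Arguments. Unset Strict Implicit. Unset Printing Implicit Defensive.
Import Order.TTheory GRing.Theory Num.Theory.
Import numFieldNormedType.Exports.
Local Open Scope classical_set_scope.
Local Open Scope ring_scope.

Section Defs.
Context {R : realType} {d : measure_display} {T : measurableType d}.

Definition Ex (P : probability T R) (f : T -> R) : \bar R :=
  (\int[P]_x (f x)%:E)%E.

Definition sq_int (P : probability T R) (f : T -> R) : Prop :=
  measurable_fun setT f /\ P.-integrable setT (fun x => ((f x) ^+ 2)%:E).

Definition L20 (P : probability T R) (f : T -> R) : Prop :=
  sq_int P f /\ Ex P f = 0%E.

(* {P_t : 0 <= t < eps} is a regular (quadratic-mean differentiable) parametric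
   submodel of M through P (P_0 = P) with score S. *)
Definition regular_submodel (M : set (probability T R)) (P : probability T R)
    (Pt : R -> probability T R) (S : T -> R) : Prop :=
  exists eps : R, 0 < eps /\
    (forall t, 0 <= t < eps -> M (Pt t)) /\
    (forall A, measurable A -> Pt 0 A = P A) /\
    sq_int P S /\
    exists (mu : {measure set T -> \bar R}) (p : R -> T -> R),
      (forall t, measurable_fun setT (p t)) /\
      (forall t x, 0 <= p t x) /\
      (forall t, 0 <= t < eps -> forall A, measurable A ->
          Pt t A = (\int[mu]_(x in A) (p t x)%:E)%E) /\
      (forall e : R, 0 < e -> \forall t \near 0^'+,
          (\int[mu]_x ((Num.sqrt (p t x) - Num.sqrt (p 0 x)
                         - t / 2 * S x * Num.sqrt (p 0 x)) ^+ 2)%:E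
            <= (e * t ^+ 2)%:E)%E).

Definition is_influence_curve {k : nat} (M : set (probability T R))
    (theta : probability T R -> 'I_k -> R) (P : probability T R)
    (IC : T -> 'I_k -> R) : Prop :=
  (forall i, L20 P (fun x => IC x i)) /\
  forall (Pt : R -> probability T R) (S : T -> R),
    regular_submodel M P Pt S ->
    forall i, exists c : R,
      Ex P (fun x => IC x i * S x) = c%:E /\
      (fun t => (theta (Pt t) i - theta P i) / t) @ 0^'+ --> c.

Definition variation_independent {k : nat} {G1 G2 : Type}
    (M : set (probability T R)) (theta : probability T R -> 'I_k -> R)
    (gamma1 : probability T R -> G1) (gamma2 : probability T R -> G2) : Prop :=
  forall P1 P2 P3, M P1 -> M P2 -> M P3 ->
    exists P, M P /\ theta P = theta P1 /\ gamma1 P = gamma1 P2 /\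
              gamma2 P = gamma2 P3.

Definition estimating_function {k : nat} {G1 G2 : Type}
    (M : set (probability T R)) (theta : probability T R -> 'I_k -> R)
    (gamma1 : probability T R -> G1) (gamma2 : probability T R -> G2)
    (D : T -> ('I_k -> R) -> G1 -> G2 -> 'I_k -> R) : Prop :=
  forall P, M P ->
    (forall i, Ex P (fun x => D x (theta P) (gamma1 P) (gamma2 P) i) = 0%E) /\
    (exists eps : R, 0 < eps /\
       forall th : 'I_k -> R, th <> theta P ->
         (forall i, `|th i - theta P i| < eps) ->
         exists i, Ex P (fun x => D x th (gamma1 P) (gamma2 P) i) <> 0%E) /\
    (forall (th : 'I_k -> R) P', M P' ->
       forall i, sq_int P (fun x => D x th (gamma1 P') (gamma2 P') i)).

Definition doubly_robust {k : nat} {G1 G2 : Type}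
    (M : set (probability T R)) (theta : probability T R -> 'I_k -> R)
    (gamma1 : probability T R -> G1) (gamma2 : probability T R -> G2)
    (D : T -> ('I_k -> R) -> G1 -> G2 -> 'I_k -> R) : Prop :=
  forall P, M P -> forall P'', M P'' -> forall i,
    Ex P (fun x => D x (theta P) (gamma1 P) (gamma2 P'') i) = 0%E /\
    Ex P (fun x => D x (theta P) (gamma1 P'') (gamma2 P) i) = 0%E.

Definition section1 {k : nat} {G1 G2 : Type}
    (M : set (probability T R)) (theta : probability T R -> 'I_k -> R)
    (gamma1 : probability T R -> G1) (gamma2 : probability T R -> G2)
    (P : probability T R) : set (probability T R) :=
  [set Q | M Q /\ theta Q = theta P /\ gamma2 Q = gamma2 P].

Definition section2 {k : nat} {G1 G2 : Type}
    (M : set (probability T R)) (theta : probability T R -> 'I_k -> R)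
    (gamma1 : probability T R -> G1) (gamma2 : probability T R -> G2)
    (P : probability T R) : set (probability T R) :=
  [set Q | M Q /\ theta Q = theta P /\ gamma1 Q = gamma1 P].

Definition convex_laws (S : set (probability T R)) : Prop :=
  forall Q1 Q2, S Q1 -> S Q2 -> forall l : R, 0 <= l <= 1 ->
    exists Q, S Q /\ forall A, measurable A ->
      Q A = (l%:E * Q1 A + (1 - l)%:E * Q2 A)%E.

Definition sq_int_likelihood_ratios (S : set (probability T R)) : Prop :=
  forall Q1 Q2, S Q1 -> S Q2 ->
    exists r : T -> R, (forall x, 0 <= r x) /\ sq_int Q2 r /\
      forall A, measurable A -> Q1 A = (\int[Q2]_(x in A) (r x)%:E)%E.

End Defs.

From HB Require Import structures.
From mathcomp Require Import all_boot all_order all_algebra.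
From mathcomp Require Import all_classical all_reals all_analysis.
From mathcomp Require Import ring lra measurable_realfun.
Set Implicit Arguments. Unset Strict Implicit. Unset Printing Implicit Defensive.
Import Order.TTheory GRing.Theory Num.Theory.
Import numFieldNormedType.Exports.
Local Open Scope classical_set_scope.
Local Open Scope ring_scope.

(* Fix Q in M. Inside a convex section S of Q the parameter is constant, and for
   P in S with likelihood ratio r = dP/dQ the mixtures t P + (1 - t) Q form a
   quadratic-mean differentiable path in S with score r - 1 (the Hellinger
   remainder is controlled by dominated convergence since r is in L^2(Q)).
   The pathwise derivative of theta along it vanishes, so the influence curve
   IC_Q is orthogonal to r - 1 in L^2(Q), i.e. E_P[IC_Q] = E_Q[IC_Q r] = E_Q[IC_Q] = 0.
   Variation independence provides a Q with the parameter and gamma_1 of P and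
   the gamma_2 of any other law, so P lies in the second section of Q and
   IC_Q = D(theta(P), gamma_1(P), gamma_2(P'')); symmetrically for gamma_1. *)

Section SqrtBounds.
Variable R : realType.

Definition trunc_sq (s h : R) : R := s ^+ 2 * Order.min 1 (s ^+ 2 * h ^+ 2).

Lemma trunc_sq_ge0 s h : 0 <= trunc_sq s h.
Proof. by rewrite mulr_ge0 ?sqr_ge0 // le_min ler01 mulr_ge0 ?sqr_ge0. Qed.

Lemma trunc_sq_le_sq s h : trunc_sq s h <= s ^+ 2.
Proof. by rewrite -[leRHS]mulr1 ler_wpM2l ?sqr_ge0 ?ge_min ?lexx. Qed.

Lemma trunc_sq_le s h : trunc_sq s h <= s ^+ 2 * (s ^+ 2 * h ^+ 2).
Proof. by rewrite ler_wpM2l ?sqr_ge0 // ge_min lexx orbT. Qed.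

Lemma sqrt1D_sub1_exp4_le (u : R) : -1 <= u ->
  (Num.sqrt (1 + u) - 1) ^+ 4 <= Order.min (u ^+ 2) (u ^+ 4).
Proof.
move=> u_ge; have u0 : 0 <= 1 + u by lra.
have a0 := sqrtr_ge0 (1 + u); have aa := sqr_sqrtr u0.
set a := Num.sqrt (1 + u) in a0 aa *.
have u2E : u ^+ 2 = (a - 1) ^+ 2 * (a + 1) ^+ 2.
  have -> : u = a ^+ 2 - 1 by rewrite aa; ring.
  by ring.
have b0 := sqr_ge0 (a - 1).
have bc : (a - 1) ^+ 2 <= (a + 1) ^+ 2 by nra.
have c1 : 1 <= (a + 1) ^+ 2 by nra.
have e4 (x : R) : x ^+ 4 = (x ^+ 2) ^+ 2 by rewrite -exprM.
rewrite le_min !e4 u2E; apply/andP; split.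
- by rewrite [X in X <= _]expr2; exact: ler_wpM2l.
- have c2 : 1 <= ((a + 1) ^+ 2) ^+ 2 by nra.
  have := mulr_ge0 b0 b0; rewrite exprMn; nra.
Qed.

Lemma sqrt1D_taylor_sq (u : R) : -1 <= u ->
  (Num.sqrt (1 + u) - 1 - u / 2) ^+ 2 = (Num.sqrt (1 + u) - 1) ^+ 4 / 4.
Proof.
move=> u_ge; have aa : Num.sqrt (1 + u) ^+ 2 = 1 + u by rewrite sqr_sqrtr //; lra.
have -> : u / 2 = (Num.sqrt (1 + u) ^+ 2 - 1) / 2 by rewrite aa; field.
by field.
Qed.

Lemma sqrt1D_taylor_sq_le (t h s : R) : 0 <= t <= h -> -1 <= t * s ->
  (Num.sqrt (1 + t * s) - 1 - t * s / 2) ^+ 2 <=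
    t ^+ 2 / 4 * trunc_sq s h.
Proof.
move=> /andP[t0 th] ts_ge; rewrite sqrt1D_taylor_sq // /trunc_sq.
have t2h : t ^+ 2 <= h ^+ 2 by rewrite ler_sqr ?nnegrE //; lra.
have := sqrt1D_sub1_exp4_le ts_ge.
have e4 (x : R) : x ^+ 4 = (x ^+ 2) ^+ 2 by rewrite -exprM.
rewrite le_min => /andP[le2 le4].
case: (leP 1 (s ^+ 2 * h ^+ 2)) => _.
- by rewrite mulr1; move: le2; rewrite exprMn; lra.
- move: le4; rewrite e4 !exprMn => le4.
  have : t ^+ 2 * s ^+ 2 * (t ^+ 2 * s ^+ 2) <= t ^+ 2 * s ^+ 2 * (s ^+ 2 * h ^+ 2).
    by apply: ler_wpM2l; [rewrite mulr_ge0 ?sqr_ge0|rewrite mulrC ler_wpM2l ?sqr_ge0].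
  lra.
Qed.

End SqrtBounds.

Section SquareIntegrable.
Context {R : realType} {d : measure_display} {T : measurableType d}.
Implicit Types (P Q : probability T R) (f g r : T -> R).

Lemma sq_int_integrable P f : sq_int P f -> P.-integrable setT (EFin \o f).
Proof.
case=> mf fi.
have ci := finite_measure_integrable_cst P 1 measurableT.
apply: (le_integrable measurableT _ _ (integrableD measurableT ci fi)).
  exact/measurable_EFinP.
move=> x _ /=; rewrite lee_fin [X in _ <= X]ger0_norm ?addr_ge0 ?sqr_ge0 //.
by rewrite ler_norml; apply/andP; split; nra.
Qed.

Lemma sq_int_integrableM P f g :
  sq_int P f -> sq_int P g -> P.-integrable setT (fun x => (f x * g x)%:E).
Proof.
case=> mf fi [mg gi].
apply: (le_integrable measurableT _ _ (integrableD measurableT fi gi)).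
  by apply/measurable_EFinP; exact: measurable_funM.
move=> x _ /=; rewrite lee_fin [X in _ <= X]ger0_norm ?addr_ge0 ?sqr_ge0 // normrM.
have := sqr_ge0 (`|f x| - `|g x|).
by rewrite -(real_normK (num_real (f x))) -(real_normK (num_real (g x))); nra.
Qed.

Lemma sq_int_subr_cst P f (c : R) : sq_int P f -> sq_int P (fun x => f x - c).
Proof.
case=> mf fi; have mfc : measurable_fun setT (fun x => f x - c).
  by apply: measurable_funB => //; exact: measurable_cst.
split => //.
have ci := finite_measure_integrable_cst P (2 * c ^+ 2) measurableT.
apply: (le_integrable measurableT _ _ (integrableD measurableT ci (integrableZl measurableT 2 fi))).
  by apply/measurable_EFinP; exact: measurable_funX.
move=> x _ /=; rewrite lee_fin [X in X <= _]ger0_norm ?sqr_ge0 //.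
rewrite ger0_norm; last by have := sqr_ge0 c; have := sqr_ge0 (f x); lra.
by have := sqr_ge0 (f x + c); nra.
Qed.

Lemma Ex_change_density P Q r f :
  (forall x, 0 <= r x) -> Q.-integrable setT (EFin \o r) ->
  (forall A, measurable A -> P A = (\int[Q]_(x in A) (r x)%:E)%E) ->
  P.-integrable setT (EFin \o f) ->
  Ex P f = (\int[Q]_x (f x * r x)%:E)%E.
Proof.
move=> r0 ri PE fi.
have mr : measurable_fun setT (EFin \o r) := measurable_int _ ri.
have PQ : P `<< Q.
  apply/null_content_dominatesP => A mA QA.
  by rewrite PE // null_set_integral //; exact: measurable_funS mr.
have rRN : ae_eq Q setT (EFin \o r) (Radon_Nikodym (charge_of_finite_measure P) Q).
  apply: integral_ae_eq => // E _ mE.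
  by rewrite -PE // -Radon_Nikodym_integral.
rewrite /Ex -(Radon_Nikodym_change_of_variables PQ measurableT fi).
apply: ae_eq_integral => //.
- apply: emeasurable_funM; first exact: measurable_int fi.
  by apply: measurable_int; exact: Radon_Nikodym_integrable.
- apply/measurable_EFinP; apply: measurable_funM; last exact/measurable_EFinP.
  exact/measurable_EFinP/(measurable_int _ fi).
apply: ae_eq_trans (ae_eqe_mul2l (EFin \o f) (ae_eq_sym rRN)) _.
by apply: aeW => x _ /=; rewrite EFinM.
Qed.

End SquareIntegrable.

Section LinearDensityPath.
Context {R : realType} {d : measure_display} {T : measurableType d}.

(* Submodel laws must exist for every real t, so the mixture weight is clamped to [0, 1]. *)
Definition clamp01 (t : R) : R := if 0 <= t <= 1 then t else 0.

Lemma clamp01_id t : 0 <= t <= 1 -> clamp01 t = t.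
Proof. by rewrite /clamp01 => ->. Qed.

Lemma clamp01_ge0 t : 0 <= clamp01 t.
Proof. by rewrite /clamp01; case: ifP => // /andP[]. Qed.

Lemma clamp01_le1 t : clamp01 t <= 1.
Proof. by rewrite /clamp01; case: ifP => // /andP[]. Qed.

Lemma trunc_sq_integral_cvg0 (Q : probability T R) (s : T -> R) : sq_int Q s ->
  (fun n => \int[Q]_x (trunc_sq (s x) (harmonic n))%:E)%E @ \oo --> 0%E.
Proof.
move=> [ms si].
have mtr n : measurable_fun setT (fun x => (trunc_sq (s x) (harmonic n))%:E).
  apply/measurable_EFinP; apply: measurable_funM; first exact: measurable_funX.
  apply: measurable_minr; first exact: measurable_cst.
  by apply: measurable_funM; [exact: measurable_funX|exact: measurable_cst].
have tr_cvg0 x : (fun n => (trunc_sq (s x) (harmonic n))%:E) @ \oo --> 0%E.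
  apply: cvg_EFin; first exact: nearW.
  have sq : \forall n \near \oo, cst 0 n <= trunc_sq (s x) (harmonic n)
      <= (s x ^+ 2 * s x ^+ 2) * (harmonic n * harmonic n).
    apply: nearW => n; rewrite trunc_sq_ge0 /=.
    by have := trunc_sq_le (s x) (harmonic n); rewrite !expr2 !mulrA.
  apply: (squeeze_cvgr sq (cvg_cst 0)).
  have := cvgM (cvg_cst (s x ^+ 2 * s x ^+ 2)) (cvgM (@cvg_harmonic R) (@cvg_harmonic R)).
  by rewrite !mulr0 => h; apply: h.
have dom : {ae Q, forall x n, setT x -> (`|(trunc_sq (s x) (harmonic n))%:E| <= (s x ^+ 2)%:E)%E}.
  by apply: aeW => x n _; rewrite abse_EFin lee_fin ger0_norm ?trunc_sq_ge0 ?trunc_sq_le_sq.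
have [_ _] := dominated_convergence measurableT mtr (measurable_cst (0 : \bar R))
  (aeW Q (fun x _ => tr_cvg0 x)) si dom.
by rewrite integral0.
Qed.

Lemma linear_density_path_qmd (Q : probability T R) (s : T -> R) :
  (forall x, -1 <= s x) -> sq_int Q s ->
  forall e : R, 0 < e -> \forall t \near 0^'+,
    (\int[Q]_x ((Num.sqrt (1 + clamp01 t * s x) - Num.sqrt (1 + clamp01 0 * s x)
                 - t / 2 * s x * Num.sqrt (1 + clamp01 0 * s x)) ^+ 2)%:E
       <= (e * t ^+ 2)%:E)%E.
Proof.
move=> s_ge hs e e0; have [ms _] := hs.
have /fine_cvgP[trfin trcvg] := trunc_sq_integral_cvg0 hs.
have e4 : 0 < 4 * e by rewrite mulr_gt0.
have [N _ /(_ N (leqnn N)) trN] : \forall n \near \oo,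
    (\int[Q]_x (trunc_sq (s x) (harmonic n))%:E < (4 * e)%:E)%E.
  apply: filterS2 trfin (cvgr_lt 0 trcvg _ e4) => n fin lt.
  by rewrite -(fineK fin) lte_fin.
near=> t.
have t0 : 0 < t by near: t; exact: nbhs_right_gt.
have tN : t < harmonic N by near: t; apply: nbhs_right_lt; exact: harmonic_gt0.
have t1 : t <= 1.
  by apply: (le_trans (ltW tN)); rewrite /= invf_le1 ?ltr0Sn // ler1n.
have ts_ge x : -1 <= t * s x.
  by have := s_ge x; case: (leP 0 (s x)) => ?; nra.
rewrite (eq_integral (fun x => ((Num.sqrt (1 + t * s x) - 1 - t * s x / 2) ^+ 2)%:E));
  last first.
  move=> x _; rewrite clamp01_id ?ltW ?t0 // clamp01_id ?lexx ?ler01 //.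
  by rewrite mul0r addr0 sqrtr1 mulr1 mulrAC.
have msqrt : measurable_fun setT (fun x => Num.sqrt (1 + t * s x)).
  apply: (measurableT_comp (continuous_measurable_fun (@sqrt_continuous R))).
  by apply: measurable_funD; [exact: measurable_cst|exact: measurable_funM].
have mtr : measurable_fun setT (fun x => (trunc_sq (s x) (harmonic N))%:E).
  apply/measurable_EFinP; apply: measurable_funM; first exact: measurable_funX.
  apply: measurable_minr; first exact: measurable_cst.
  by apply: measurable_funM; [exact: measurable_funX|exact: measurable_cst].
apply: (@le_trans _ _ (\int[Q]_x ((t ^+ 2 / 4)%:E * (trunc_sq (s x) (harmonic N))%:E))%E).
  apply: ge0_le_integral => //.
  - by move=> x _; rewrite lee_fin sqr_ge0.
  - apply/measurable_EFinP; apply: measurable_funX.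
    apply: measurable_funB; first by apply: measurable_funB => //; exact: measurable_cst.
    by apply: measurable_funM => //; apply: measurable_funM => //; exact: measurable_cst.
  - exact: measurable_funeM.
  - move=> x _; rewrite -EFinM lee_fin; apply: sqrt1D_taylor_sq_le => //.
    by rewrite ltW //= ltW.
have k0 : 0 <= t ^+ 2 / 4 by rewrite mulr_ge0 // sqr_ge0.
rewrite ge0_integralZl_EFin //; last by move=> x _; rewrite lee_fin trunc_sq_ge0.
apply: (le_trans (lee_wpmul2l _ (ltW trN))); first by rewrite lee_fin.
by rewrite -EFinM lee_fin; lra.
Unshelve. all: by end_near.
Qed.

End LinearDensityPath.

Section MixturePath.
Context {R : realType} {d : measure_display} {T : measurableType d}.
Implicit Types (P Q : probability T R) (M S : set (probability T R)).

Lemma mixture_densityE P Q (r : T -> R) (c : R) :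
  (forall x, 0 <= r x) -> measurable_fun setT r ->
  (forall A, measurable A -> P A = (\int[Q]_(x in A) (r x)%:E)%E) ->
  0 <= c <= 1 -> forall A, measurable A ->
  (c%:E * P A + (1 - c)%:E * Q A)%E = (\int[Q]_(x in A) (1 + c * (r x - 1))%:E)%E.
Proof.
move=> r0 mr PE /andP[c0 c1] A mA.
have mrA : measurable_fun A (EFin \o r) by apply: measurable_funTS; exact/measurable_EFinP.
rewrite (eq_integral (fun x => ((1 - c)%:E + c%:E * (r x)%:E)%E)); last first.
  by move=> x _; rewrite -EFinM -EFinD; congr EFin; ring.
have c1' : 0 <= 1 - c by rewrite subr_ge0.
rewrite ge0_integralD //; last 2 first.
- by move=> x _; rewrite mule_ge0 ?lee_fin.
- exact: measurable_funeM.
rewrite integral_cst // ge0_integralZl_EFin //; last by move=> x _; rewrite lee_fin.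
by rewrite -PE // addeC.
Qed.

Lemma mixture_regular_submodel M S P Q (r : T -> R) :
  S `<=` M -> convex_laws S -> S P -> S Q ->
  (forall x, 0 <= r x) -> sq_int Q r ->
  (forall A, measurable A -> P A = (\int[Q]_(x in A) (r x)%:E)%E) ->
  exists Pt : R -> probability T R,
    (forall t, S (Pt t)) /\ regular_submodel M Q Pt (fun x => r x - 1).
Proof.
move=> SM Sconv SP SQ r0 hr PE; have [mr _] := hr.
have hs := sq_int_subr_cst 1 hr.
have mix t : exists Qt, S Qt /\ forall A, measurable A ->
    Qt A = ((clamp01 t)%:E * P A + (1 - clamp01 t)%:E * Q A)%E.
  by apply: Sconv => //; rewrite clamp01_ge0 clamp01_le1.
have [Pt Pt_mix] := choice mix.
have clamp01_0 : clamp01 0 = 0 :> R by rewrite clamp01_id // lexx ler01.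
exists Pt; split=> [t|]; first by case: (Pt_mix t).
exists 1; split; first exact: ltr01.
split; first by move=> t _; apply: SM; case: (Pt_mix t).
split; first by move=> A mA; case: (Pt_mix 0) => _ ->//; rewrite clamp01_0 mul0e add0e subr0 mul1e.
split=> //.
exists Q, (fun t x => 1 + clamp01 t * (r x - 1)); split.
  move=> t; apply: measurable_funD; first exact: measurable_cst.
  apply: measurable_funM; first exact: measurable_cst.
  by apply: measurable_funB => //; exact: measurable_cst.
split.
  by move=> t x; have := clamp01_ge0 t; have := clamp01_le1 t; have := r0 x; nra.
split; last by apply: linear_density_path_qmd hs => x; have := r0 x; lra.
move=> t _ A mA; case: (Pt_mix t) => _ ->//.
by apply: mixture_densityE => //; rewrite clamp01_ge0 clamp01_le1.
Qed.

End MixturePath.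

Section InfluenceCurve.
Context {R : realType} {d : measure_display} {T : measurableType d}.
Implicit Types (P Q : probability T R) (M S : set (probability T R)).

Lemma influence_curve_score_orthogonal k M (theta : probability T R -> 'I_k -> R)
    Q (IC : T -> 'I_k -> R) (Pt : R -> probability T R) (s : T -> R) :
  is_influence_curve M theta Q IC -> regular_submodel M Q Pt s ->
  (forall t, theta (Pt t) = theta Q) ->
  forall i, Ex Q (fun x => IC x i * s x) = 0%E.
Proof.
move=> [_ ICder] reg theta_const i.
have [c [-> c_lim]] := ICder Pt s reg i.
have dtheta0 : (fun t => (theta (Pt t) i - theta Q i) / t) = cst 0.
  by apply/funext => t; rewrite theta_const subrr mul0r.
by rewrite dtheta0 in c_lim; rewrite (cvg_unique _ c_lim (cvg_cst 0)).
Qed.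

Lemma influence_curve_mean0_on_section k M (theta : probability T R -> 'I_k -> R)
    Q (IC : T -> 'I_k -> R) S P i :
  is_influence_curve M theta Q IC ->
  S `<=` M -> (forall Q', S Q' -> theta Q' = theta Q) ->
  convex_laws S -> sq_int_likelihood_ratios S -> S P -> S Q ->
  sq_int P (fun x => IC x i) ->
  Ex P (fun x => IC x i) = 0%E.
Proof.
move=> ICQ SM theta_const Sconv Slr SP SQ ICP.
have [r [r0 [hr PE]]] := Slr P Q SP SQ.
have [Pt [SPt reg]] := mixture_regular_submodel SM Sconv SP SQ r0 hr PE.
rewrite (Ex_change_density r0 (sq_int_integrable hr) PE (sq_int_integrable ICP)).
have [ICQ2 ICQ0] := ICQ.1 i.
have <- : Ex Q (fun x => IC x i * (r x - 1)) = 0%E.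
  exact: influence_curve_score_orthogonal ICQ reg (fun t => theta_const _ (SPt t)) i.
rewrite /Ex [RHS](eq_integral (fun x => ((IC x i * r x)%:E - (IC x i)%:E)%E)); last first.
  by move=> x _; rewrite -EFinB mulrBr mulr1.
rewrite integralB //; [|exact: sq_int_integrableM|exact: sq_int_integrable].
by move: ICQ0; rewrite /Ex => ->; rewrite sube0.
Qed.

End InfluenceCurve.

Theorem theorem1 (R : realType) (d : measure_display) (T : measurableType d)
    (k : nat) (G1 G2 : Type) (M : set (probability T R))
    (theta : probability T R -> 'I_k -> R)
    (gamma1 : probability T R -> G1) (gamma2 : probability T R -> G2)
    (D : T -> ('I_k -> R) -> G1 -> G2 -> 'I_k -> R) :
  variation_independent M theta gamma1 gamma2 ->
  estimating_function M theta gamma1 gamma2 D ->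
  (forall P, M P ->
     is_influence_curve M theta P
       (fun x => D x (theta P) (gamma1 P) (gamma2 P))) ->
  (forall P, M P ->
     convex_laws (section1 M theta gamma1 gamma2 P) /\
     sq_int_likelihood_ratios (section1 M theta gamma1 gamma2 P) /\
     convex_laws (section2 M theta gamma1 gamma2 P) /\
     sq_int_likelihood_ratios (section2 M theta gamma1 gamma2 P)) ->
  doubly_robust M theta gamma1 gamma2 D.
Proof.
move=> VI EF IC CV P MP P'' MP'' i.
have D_sq_int Q : M Q -> sq_int P (fun x => D x (theta Q) (gamma1 Q) (gamma2 Q) i).
  by move=> MQ; exact: (EF P MP).2.2 (theta Q) Q MQ i.
split.
- have [Q [MQ [thQ [g1Q g2Q]]]] := VI P P P'' MP MP MP''.
  rewrite -thQ -g1Q -g2Q.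
  have [_ [_ [conv2 lr2]]] := CV Q MQ.
  apply: (influence_curve_mean0_on_section (IC Q MQ) _ _ conv2 lr2) (D_sq_int Q MQ).
  + by move=> ? [].
  + by move=> ? [_ []].
  + by split => //; split.
  + by [].
- have [Q [MQ [thQ [g1Q g2Q]]]] := VI P P'' P MP MP'' MP.
  rewrite -thQ -g1Q -g2Q.
  have [conv1 [lr1 _]] := CV Q MQ.
  apply: (influence_curve_mean0_on_section (IC Q MQ) _ _ conv1 lr1) (D_sq_int Q MQ).
  + by move=> ? [].
  + by move=> ? [_ []].
  + by split => //; split.
  + by [].
Qed.
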